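(* Let $X$ be a $T_1$ space and $\mathcal{P}$ an ideal of closed subsets of $X$ containing every singleton subset of $X$. Then: (1) a nonzero ideal $I$ of $C(X)_\mathcal{P}$ is minimal if and only if there exists $\alpha\in X$ with $I=\langle\chi_{\{\alpha\}}\rangle$, if and only if $|Z_\mathcal{P}[I]|=2$; (2) the socle of $C(X)_\mathcal{P}$ consists exactly of the functions in $C(X)_\mathcal{P}$ that vanish everywhere except on a finite set; (3) the socle of $C(X)_\mathcal{P}$ is an essential ideal and is free.
   Context: An ideal of closed subsets of $X$ is a family $\mathcal{P}$ of closed subsets closed under finite unions and under passing to closed subsets. $D_f$ is the set of discontinuity points of $f\in\mathbb{R}^X$; $C(X)_\mathcal{P}=\{f\in\mathbb{R}^X\colon\overline{D_f}\in\mathcal{P}\}$, a commutative ring with pointwise operations. $\chi_A$ denotes the characteristic function of $A$. For $f\in C(X)_\mathcal{P}$, $Z_\mathcal{P}(f)=\{x\colon f(x)=0\}$ and $Z_\mathcal{P}[I]=\{Z_\mathcal{P}(f)\colon f\in I\}$. The socle is the sum of all minimal ideals. An ideal is essential if it meets every nonzero ideal nontrivially; an ideal $I$ is free if $\bigcap Z_\mathcal{P}[I]=\emptyset$. *)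

From HB Require Import structures.
From mathcomp Require Import all_boot all_order all_algebra.
From mathcomp Require Import all_classical all_reals all_analysis.
Set Implicit Arguments. Unset Strict Implicit. Unset Printing Implicit Defensive.
Import Order.TTheory GRing.Theory Num.Theory numFieldNormedType.Exports.
Local Open Scope classical_set_scope.
Local Open Scope ring_scope.

Section Defs.
Context {R : realType} {X : topologicalType}.

Definition closed_ideal (P : set (set X)) : Prop :=
  [/\ P set0,
      (forall A, P A -> closed A),
      (forall A B, P A -> P B -> P (A `|` B)) &
      (forall A B, P A -> closed B -> B `<=` A -> P B)].

Definition discont (f : X -> R) : set X := [set x : X | ~ {for x, continuous f}].

Definition CP (P : set (set X)) (f : X -> R) : Prop := P (closure (discont f)).

Definition zerof : X -> R := fun _ => 0.

Definition ideal (P : set (set X)) (I : set (X -> R)) : Prop :=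
  [/\ I `<=` CP P,
      I zerof,
      (forall f g, I f -> I g -> I (fun x => f x + g x)),
      (forall f, I f -> I (fun x => - f x)) &
      (forall f g, CP P g -> I f -> I (fun x => g x * f x))].

Definition nonzero_ideal (I : set (X -> R)) : Prop := exists2 f, I f & f <> zerof.

Definition minimal_ideal (P : set (set X)) (I : set (X -> R)) : Prop :=
  [/\ ideal P I, nonzero_ideal I &
      forall J, ideal P J -> nonzero_ideal J -> J `<=` I -> J = I].

Definition chi (A : set X) : X -> R := fun x => if `[< A x >] then 1 else 0.

Definition principal (P : set (set X)) (h : X -> R) : set (X -> R) :=
  [set f | exists2 g, CP P g & f = (fun x => g x * h x)].

Definition ZP (f : X -> R) : set X := [set x | f x = 0].
Definition ZPI (I : set (X -> R)) : set (set X) := [set ZP f | f in I].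

Definition fsum (s : seq (X -> R)) : X -> R :=
  foldr (fun g h x => g x + h x) zerof s.

(* socle: sum of all minimal ideals = finite sums of elements of minimal ideals *)
Definition socle (P : set (set X)) : set (X -> R) :=
  [set f | exists s : seq (X -> R),
      (forall g, g \in s -> exists2 I, minimal_ideal P I & I g) /\ f = fsum s].

Definition essential_ideal (P : set (set X)) (I : set (X -> R)) : Prop :=
  ideal P I /\
  forall J, ideal P J -> nonzero_ideal J -> exists2 f, (I `&` J) f & f <> zerof.

Definition free_ideal (I : set (X -> R)) : Prop := \bigcap_(Z in ZPI I) Z = set0.

End Defs.

From mathcomp Require Import all_boot all_order all_algebra.
From mathcomp Require Import all_classical all_reals all_analysis.
Local Open Scope classical_set_scope.
Local Open Scope ring_scope.
Import Order.TTheory GRing.Theory Num.Theory numFieldNormedType.Exports.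

(* If f lies in an ideal I and f a != 0, then chi [set a], which equals
   ((f a)^-1 chi [set a]) f, lies in I too, the multiplier being in C(X)_P
   because P contains the closed singletons.  Hence every nonzero ideal
   contains some <chi [set a]>, whose elements are the multiples
   c chi [set a]: these are the minimal ideals, with zero sets X and X \ {a},
   while an ideal with elements nonzero at two distinct points has at least
   three zero sets.  Sums of such multiples are exactly the finitely supported
   members of C(X)_P, and chi [set a] lies both in the socle and in every ideal
   with an element nonzero at a: the socle is essential and free. *)

Lemma set2_no_three {T : Type} {A B U V W : T} :
  [set A; B] U -> [set A; B] V -> [set A; B] W ->
  U <> V -> U <> W -> V <> W -> False.
Proof. by move=> [] -> [] -> [] ->. Qed.

Section Functions.
Context {R : realType} {X : topologicalType}.
Implicit Types (f : X -> R) (a x : X).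

Lemma nonzero_funP f : f <> zerof -> exists a, f a != 0.
Proof.
move=> fN0; apply: contrapT => f_eq0; apply: fN0; apply/funext => x.
by apply/eqP; apply: contrapT => fx; apply: f_eq0; exists x; apply/negP.
Qed.

Lemma fsumE (s : seq (X -> R)) x : fsum s x = \sum_(g <- s) g x.
Proof. by elim: s => [|g s IHs]; rewrite ?big_nil ?big_cons //= IHs. Qed.

Lemma chi1E a x : chi [set a] x = (x == a)%:R :> R.
Proof.
by rewrite /chi (asbool_equiv_eqP eqP (iff_refl (x = a))); case: eqP.
Qed.

Lemma chi1_id a : chi [set a] a = 1 :> R.
Proof. by rewrite chi1E eqxx. Qed.

Lemma chi1_neq0 a : chi [set a] <> zerof :> (X -> R).
Proof.
by move/(congr1 (fun f => f a)); rewrite chi1_id => /eqP; rewrite oner_eq0.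
Qed.

Lemma chi1_mull a f x : chi [set a] x * f x = f a * chi [set a] x.
Proof.
by rewrite !chi1E; case: eqP => [->|_]; rewrite ?mul1r ?mulr1 ?mul0r ?mulr0.
Qed.

Lemma ZP_zerof : ZP (zerof : X -> R) = setT.
Proof. by apply/seteqP; split. Qed.

Lemma ZP_chi1 a : ZP (chi [set a] : X -> R) = ~` [set a].
Proof.
apply/seteqP; split => x; rewrite /ZP /= chi1E.
  by case: eqP => // _ /eqP; rewrite oner_eq0.
by move/eqP/negPf => ->.
Qed.

End Functions.

Section PiecewiseContinuous.
Context {R : realType} {X : topologicalType} {P : set (set X)}.
Hypothesis P_ideal : closed_ideal P.
Implicit Types (f g h : X -> R) (a x : X).

Lemma CP_lift2 f g h :
  (forall x, {for x, continuous f} -> {for x, continuous g} ->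
     {for x, continuous h}) ->
  CP P f -> CP P g -> CP P h.
Proof.
case: P_ideal => _ _ PU PS fgh Pf Pg.
apply: (PS _ _ (PU _ _ Pf Pg)); first exact: closed_closure.
rewrite -closureU; apply: closureS => x /= hx.
by apply: contrapT => /not_orP[/contrapT cf /contrapT cg]; exact: hx (fgh x cf cg).
Qed.

Lemma CP_cst (c : R) : CP P (fun _ : X => c).
Proof.
case: P_ideal => P0 _ _ _; rewrite /CP.
suff -> : discont (fun _ : X => c) = set0 by rewrite closure0.
by apply/seteqP; split => // x; apply; exact: cst_continuous.
Qed.

Lemma CPD f g : CP P f -> CP P g -> CP P (fun x => f x + g x).
Proof. by apply: CP_lift2 => x; exact: continuousD. Qed.

Lemma CPN f : CP P f -> CP P (fun x => - f x).
Proof.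
by move=> Pf; apply: (@CP_lift2 f f _ _ Pf Pf) => x cf _; exact: continuousN.
Qed.

Lemma CPM f g : CP P f -> CP P g -> CP P (fun x => f x * g x).
Proof. by apply: CP_lift2 => x; exact: continuousM. Qed.

Hypothesis X_T1 : accessible_space X.
Hypothesis P_points : forall a, P [set a].

(* In a T1 space chi [set a] is locally constant off the closed set [set a]. *)
Lemma CP_chi1 a : CP P (chi [set a] : X -> R).
Proof.
case: P_ideal => _ _ _ PS.
have a_closed : closed [set a] by exact: accessible_closed_set1.
apply: (PS _ _ (P_points a)); first exact: closed_closure.
rewrite [S in _ `<=` S](closure_id _).1 //.
apply: closureS => x; apply: contra_notP => xa.
have Ca_nbhs : nbhs x (~` [set a]).
  by apply: open_nbhs_nbhs; split => //; exact: closed_openC.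
apply: cvg_near_cst; apply: filterS Ca_nbhs => y /= ya.
by rewrite !chi1E; move/eqP/negPf: ya => ->; move/eqP/negPf: xa => ->.
Qed.

End PiecewiseContinuous.

Definition CPfin {R : realType} {X : topologicalType} (P : set (set X)) :
  set (X -> R) := [set f | CP P f /\ finite_set [set x | f x != 0]].

Section Ideals.
Context {R : realType} {X : topologicalType} {P : set (set X)}.
Hypothesis P_ideal : closed_ideal P.
Hypothesis X_T1 : accessible_space X.
Hypothesis P_points : forall a, P [set a].
Implicit Types (I J : set (X -> R)) (f g : X -> R) (a x : X).
Local Notation chi1 a := (chi [set a] : X -> R).

Lemma ideal_chi1 {I f a} : ideal P I -> I f -> f a != 0 -> I (chi1 a).
Proof.
case=> _ _ _ _ IM If fa; suff -> : chi1 a = fun x => (f a)^-1 * chi1 a x * f x.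
  apply: (IM _ (fun x => (f a)^-1 * chi1 a x)) If.
  by apply: CPM => //; [exact: CP_cst | exact: CP_chi1].
by apply/funext => x; rewrite -mulrA chi1_mull mulKf.
Qed.

Lemma principal_chi1E {a f} :
  principal P (chi1 a) f -> f = fun x => f a * chi1 a x.
Proof.
by case=> g _ ->; apply/funext => x; rewrite chi1_id mulr1 mulrC chi1_mull.
Qed.

Lemma principal_chi1_scale a (c : R) :
  principal P (chi1 a) (fun x => c * chi1 a x).
Proof. by exists (fun=> c); first exact: CP_cst. Qed.

Lemma principal_chi1_id a : principal P (chi1 a) (chi1 a).
Proof.
by exists (fun=> 1); [exact: CP_cst | apply/funext => x; rewrite mul1r].
Qed.

Lemma principal_chi1_ideal a : ideal P (principal P (chi1 a)).
Proof.
split.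
- by move=> _ [g Pg ->]; apply: CPM => //; exact: CP_chi1.
- by exists (fun=> 0); [exact: CP_cst | apply/funext => x; rewrite mul0r].
- move=> _ _ [f Pf ->] [g Pg ->]; exists (fun x => f x + g x); first exact: CPD.
  by apply/funext => x; rewrite mulrDl.
- move=> _ [f Pf ->]; exists (fun x => - f x); first exact: CPN.
  by apply/funext => x; rewrite mulNr.
- move=> _ h Ph [g Pg ->]; exists (fun x => h x * g x); first exact: CPM.
  by apply/funext => x; rewrite mulrA.
Qed.

Lemma principal_chi1_sub {I a} :
  ideal P I -> I (chi1 a) -> principal P (chi1 a) `<=` I.
Proof. by case=> _ _ _ _ IM Ia _ [g Pg ->]; exact: IM. Qed.

Lemma principal_chi1_minimal a : minimal_ideal P (principal P (chi1 a)).
Proof.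
split; first exact: principal_chi1_ideal.
  by exists (chi1 a); [exact: principal_chi1_id | exact: chi1_neq0].
move=> J J_ideal [f Jf /nonzero_funP[b fb]] JI.
have ba : b = a.
  apply: contrapT => /eqP ba; move: fb; rewrite (principal_chi1E (JI _ Jf)).
  by rewrite chi1E (negPf ba) mulr0 eqxx.
apply/seteqP; split => //; apply: (principal_chi1_sub J_ideal).
by apply: (ideal_chi1 J_ideal Jf); rewrite -ba.
Qed.

Lemma minimal_principal_chi1 I :
  minimal_ideal P I -> exists a, I = principal P (chi1 a).
Proof.
case=> I_ideal [f If /nonzero_funP[a fa]] I_min; exists a; symmetry.
apply: I_min; first exact: principal_chi1_ideal.
  by exists (chi1 a); [exact: principal_chi1_id | exact: chi1_neq0].
exact/(principal_chi1_sub I_ideal)/(ideal_chi1 I_ideal If fa).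
Qed.

Lemma minimal_idealP I :
  minimal_ideal P I <-> exists a, I = principal P (chi1 a).
Proof.
split; first exact: minimal_principal_chi1.
by case=> a ->; exact: principal_chi1_minimal.
Qed.

Lemma ZPI_principal_chi1 a :
  ZPI (principal P (chi1 a)) = [set setT; ~` [set a]].
Proof.
apply/seteqP; split => [_ [f /principal_chi1E -> <-]|_ [->|->]].
- have [->|fa] := eqVneq (f a) 0.
    by left; apply/seteqP; split => // x; rewrite /ZP /= mul0r.
  right; rewrite -(ZP_chi1 (R := R)); apply/seteqP; split => x; rewrite /ZP /=.
    by move/eqP; rewrite mulf_eq0 (negPf fa) => /eqP.
  by move=> ->; rewrite mulr0.
- exists zerof; last exact: ZP_zerof.
  by case: (principal_chi1_ideal a).
- by exists (chi1 a); [exact: principal_chi1_id | exact: ZP_chi1].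
Qed.

Lemma setT_neq_setC1 a : [set: X] <> ~` [set a].
Proof. by move/seteqP => [/(_ a) + _]; apply. Qed.

(* If some g in I is nonzero at x != a while f a != 0, then setT, ~` [set a]
   and ~` [set x] are three distinct zero sets of I. *)
Lemma ZPI_two_principal_chi1 I :
  ideal P I -> nonzero_ideal I ->
  (exists A B : set X, A <> B /\ ZPI I = [set A; B]) ->
  exists a, I = principal P (chi1 a).
Proof.
move=> I_ideal [f If /nonzero_funP[a fa]] [A [B [_ ZPI_AB]]]; exists a.
have Ia := ideal_chi1 I_ideal If fa.
apply/seteqP; split; last exact: principal_chi1_sub.
move=> g Ig; rewrite (_ : g = fun x => g a * chi1 a x).
  exact: principal_chi1_scale.
apply/funext => x; rewrite chi1E.
have [-> | xa] := eqVneq x a; first by rewrite mulr1.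
rewrite mulr0; apply: contrapT => /eqP gx.
have ZPI_chi1 b : I (chi1 b) -> [set A; B] (~` [set b]).
  by rewrite -ZPI_AB => Ib; exists (chi1 b) => //; exact: ZP_chi1.
have ZPI_setT : [set A; B] [set: X].
  by rewrite -ZPI_AB; exists zerof; [case: I_ideal | exact: ZP_zerof].
have Ix := ideal_chi1 I_ideal Ig gx.
apply: (set2_no_three ZPI_setT (ZPI_chi1 _ Ia) (ZPI_chi1 _ Ix)).
- exact: setT_neq_setC1.
- exact: setT_neq_setC1.
- move/seteqP => [_ /(_ a) /= aCa]; apply: (aCa ^~ erefl) => ax.
  by rewrite ax eqxx in xa.
Qed.

Lemma minimal_ideal_ZPIP I : ideal P I -> nonzero_ideal I ->
  minimal_ideal P I <-> exists A B : set X, A <> B /\ ZPI I = [set A; B].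
Proof.
move=> I_ideal I_nz; split.
  move=> /minimal_principal_chi1[a ->]; exists setT, (~` [set a]).
  by split; [exact: setT_neq_setC1 | exact: ZPI_principal_chi1].
move=> /(ZPI_two_principal_chi1 _ I_ideal I_nz)[a ->].
exact: principal_chi1_minimal.
Qed.

Lemma fsum_ideal I (s : seq (X -> R)) :
  ideal P I -> (forall g, g \in s -> I g) -> I (fsum s).
Proof.
case=> _ I0 ID _ _; elim: s => [|g s IHs] sI //=.
apply: ID; first by apply: sI; exact: mem_head.
by apply: IHs => h hs; apply: sI; rewrite inE hs orbT.
Qed.

Lemma CPfin_ideal : ideal P (CPfin P : set (X -> R)).
Proof.
split.
- by move=> f [].
- split; first exact: CP_cst.
  by apply: sub_finite_set (finite_set0 X) => x /=; rewrite eqxx.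
- move=> f g [Pf Ff] [Pg Fg]; split; first exact: CPD.
  apply: (@sub_finite_set _ _ ([set x | f x != 0] `|` [set x | g x != 0])).
    by move=> x /=; have [->|] := eqVneq (f x) 0; [rewrite add0r; right | left].
  by rewrite finite_setU.
- move=> f [Pf Ff]; split; first exact: CPN.
  by apply: sub_finite_set Ff => x /=; rewrite oppr_eq0.
- move=> f g Pf [Pg Fg]; split; first exact: CPM.
  by apply: sub_finite_set Fg => x /=; apply: contraNN => /eqP ->; rewrite mulr0.
Qed.

Lemma minimal_ideal_sub_CPfin I : minimal_ideal P I -> I `<=` CPfin P.
Proof.
move=> I_min f If; split; first by case: I_min => -[+ _ _ _ _] _ _; apply.
have [a Ia] := minimal_principal_chi1 _ I_min; rewrite Ia in If.
apply: sub_finite_set (finite_set1 a) => x /=.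
rewrite (principal_chi1E If) chi1E.
by have [// | _] := eqVneq x a; rewrite mulr0 eqxx.
Qed.

Lemma fsum_chi1 f (s : seq X) : uniq s -> [set x | f x != 0] `<=` [set` s] ->
  f = fsum [seq (fun x => f a * chi1 a x) | a <- s].
Proof.
move=> s_uniq f_supp; apply/funext => x; rewrite fsumE big_map.
under eq_bigr => a _ do rewrite /= chi1E.
have [xs | xNs] := boolP (x \in s).
  rewrite (bigD1_seq x) //= eqxx mulr1 big1 ?addr0 // => a.
  by rewrite eq_sym => /negPf ->; rewrite mulr0.
rewrite big1_seq => [|a /= sa].
  by apply/eqP; apply: contraNT xNs => fx; exact: f_supp.
have /negPf -> : x != a by apply: contraNneq xNs => ->.
by rewrite mulr0.
Qed.

Lemma socleE : socle P = CPfin P :> set (X -> R).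
Proof.
apply/seteqP; split => [_ [s [s_min ->]] | f [Pf /finite_seqP[s f_supp]]].
  apply: fsum_ideal CPfin_ideal _ => g /s_min[I /minimal_ideal_sub_CPfin]; exact.
exists [seq (fun x => f a * chi1 a x) | a <- undup s]; split.
  move=> _ /mapP[a _ ->]; exists (principal P (chi1 a)).
    exact: principal_chi1_minimal.
  exact: principal_chi1_scale.
apply: fsum_chi1; first exact: undup_uniq.
by rewrite f_supp => x /=; rewrite mem_undup.
Qed.

Lemma CPfin_chi1 a : CPfin P (chi1 a).
Proof.
split; first exact: CP_chi1.
apply: sub_finite_set (finite_set1 a) => x /=.
by rewrite chi1E; have [// | _] := eqVneq x a; rewrite mulr0n eqxx.
Qed.

Lemma CPfin_essential : essential_ideal P (CPfin P : set (X -> R)).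
Proof.
split; first exact: CPfin_ideal.
move=> J J_ideal [f Jf /nonzero_funP[a fa]].
exists (chi1 a); last exact: chi1_neq0.
by split; [exact: CPfin_chi1 | exact: ideal_chi1 J_ideal Jf fa].
Qed.

Lemma CPfin_free : free_ideal (CPfin P : set (X -> R)).
Proof.
apply/seteqP; split => // x Zx.
have : ZP (chi1 x) x by apply: Zx; exists (chi1 x) => //; exact: CPfin_chi1.
by rewrite ZP_chi1 => /(_ erefl).
Qed.

End Ideals.

Theorem theorem5p8 (R : realType) (X : topologicalType) (P : set (set X)) :
  accessible_space X -> closed_ideal P -> (forall a : X, P [set a]) ->
  [/\ (forall I : set (X -> R), ideal P I -> nonzero_ideal I ->
         (minimal_ideal P I <-> exists a : X, I = principal P (@chi R X [set a])) /\
         (minimal_ideal P I <-> exists A B : set X, A <> B /\ ZPI I = [set A; B])),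
      socle P = [set f : X -> R | CP P f /\ finite_set [set x | f x != 0]],
      essential_ideal P (socle (R:=R) P) &
      free_ideal (socle (R:=R) P)].
Proof.
move=> X_T1 P_ideal P_points; rewrite (socleE P_ideal X_T1 P_points).
split => //.
- move=> I I_ideal I_nz; split; first exact: minimal_idealP.
  exact: minimal_ideal_ZPIP.
- exact: CPfin_essential.
- exact: CPfin_free.
Qed.
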